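(* Let $\alpha,\beta,\gamma$ be independent random variables, each uniformly distributed on $[0,1]$, and let $s_A,s_B,s_C:[0,1]^2\to\{0,1,2,3\}$ be measurable functions. Set $a=s_A(\beta,\gamma)$, $b=s_B(\alpha,\gamma)$, $c=s_C(\alpha,\beta)$, and let $p_{abc}$ denote the resulting joint distribution of $(a,b,c)$, with one-party marginals $p(a)$, $p(b)$, $p(c)$. Suppose $p(a=0)=p(b=0)=p(c=0)=\tfrac14$ and $p_{000}=\tfrac18$. Then there exist measurable sets $X,Y,Z\subseteq[0,1]$, each of Lebesgue measure $\tfrac12$, such that $$\{(\alpha,\beta,\gamma)\in[0,1]^3:\ s_A(\beta,\gamma)=0,\ s_B(\alpha,\gamma)=0,\ s_C(\alpha,\beta)=0\}=X\times Y\times Z$$ up to a set of Lebesgue measure zero. Equivalently, after a measure-preserving relabeling of each coordinate axis, this event is the cube $[0,\tfrac12]^3$.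
   Context: This setting is the local (classical) model of the triangle network: three independent sources emit $\alpha,\beta,\gamma$. Party A receives $(\beta,\gamma)$, party B receives $(\alpha,\gamma)$, and party C receives $(\alpha,\beta)$. Each party outputs a value in $\{0,1,2,3\}$ by a deterministic measurable response function. Under these assumptions the Finner inequality $p_{abc}\le\sqrt{p(a)p(b)p(c)}$ holds, and the hypotheses mean that it is saturated for the outputs $(0,0,0)$. *)

From mathcomp Require Import all_boot all_order all_algebra.
From mathcomp Require Import all_classical all_reals all_analysis.
Import Order.TTheory GRing.Theory Num.Theory.
Local Open Scope classical_set_scope.
Local Open Scope ring_scope.

Definition I01 {R : realType} : set R := `[0%R, 1%R].

(* the cube [0,1]^3, points are ((alpha, beta), gamma) *)
Definition cube3 {R : realType} : set ((R * R) * R) :=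
  (I01 `*` I01) `*` I01.

(* Lebesgue measure on R^3 (product measure); the three sources
   alpha, beta, gamma independent uniform on [0,1] are modelled by
   this measure restricted to cube3 *)
Definition lam3 {R : realType} : set ((R * R) * R) -> \bar R :=
  ((@lebesgue_measure R \x @lebesgue_measure R) \x @lebesgue_measure R)%E.

Definition out_a {R : realType} (sA : R * R -> nat) (t : (R * R) * R) : nat :=
  sA (t.1.2, t.2).
Definition out_b {R : realType} (sB : R * R -> nat) (t : (R * R) * R) : nat :=
  sB (t.1.1, t.2).
Definition out_c {R : realType} (sC : R * R -> nat) (t : (R * R) * R) : nat :=
  sC (t.1.1, t.1.2).

(* Fix gamma and let g, f be the measures of the slices {alpha | s_B(alpha, gamma) = 0}
   and {beta | s_A(beta, gamma) = 0}, and m the measure of the gamma-slice of the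
   event {a = b = c = 0}.  That slice is {s_C = 0} intersected with the product of
   the two slices, so m <= min (g f, p(c = 0)) = min (g f, 1/4) <= (g + f) / 4.
   Integrating over gamma gives 1/8 <= (1/4 + 1/4) / 4 = 1/8, so equality holds for
   almost every gamma, and equality forces either g = f = 1/2 with the slice of full
   measure 1/4 in {s_C = 0}, or g = f = 0.  The gammas of the first kind form a set
   Z of measure 1/2; the two slices X, Y at almost any one of them satisfy
   {s_C = 0} = X * Y up to a null set, and then the event is X * Y * Z up to a null
   set, slice by slice. *)

From HB Require Import structures.
From mathcomp Require Import all_boot all_order all_algebra.
From mathcomp Require Import all_classical all_reals all_analysis.
From mathcomp Require Import measurable_realfun ring lra.
Import Order.TTheory GRing.Theory Num.Theory.
Local Open Scope classical_set_scope.
Local Open Scope ring_scope.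

Lemma le_mean_of_le_min {R : realFieldType} {c g f m : R} :
  0 <= c -> 0 <= g -> 0 <= f -> m <= c ^+ 2 -> m <= g * f ->
  m <= c * (g + f) / 2.
Proof.
(* if g + f >= 2 c use m <= c^2, otherwise g f <= ((g + f) / 2)^2 <= c (g + f) / 2 *)
move=> c0 g0 f0 mc mgf; rewrite expr2 in mc.
have [cgf|gfc] := lerP (2 * c) (g + f); first by nra.
suff : g * f <= c * (g + f) / 2 by lra.
have : 0 <= (g - f) ^+ 2 by exact: sqr_ge0.
rewrite expr2; nra.
Qed.

Lemma eq_mean_of_le_min {R : realFieldType} {c g f m : R} :
  0 < c -> 0 <= g -> 0 <= f -> m <= c ^+ 2 -> m <= g * f ->
  m = c * (g + f) / 2 -> (g = c /\ f = c /\ m = c ^+ 2) \/ (g = 0 /\ f = 0).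
Proof.
move=> c0 g0 f0 mc mgf me; rewrite expr2 in mc *.
have gf_sq : 0 <= (g - f) ^+ 2 by exact: sqr_ge0.
rewrite expr2 in gf_sq.
have [cgf|gfc] := lerP (2 * c) (g + f); last by right; nra.
left.
have gfc : g + f = 2 * c by nra.
have /eqP : (g - f) * (g - f) = 0 by nra.
rewrite mulf_eq0 orbb subr_eq0 => /eqP gf.
split; [lra|split; [lra|nra]].
Qed.

Lemma measurableY {d} {T : measurableType d} {A B : set T} :
  measurable A -> measurable B -> measurable (A `+` B).
Proof. by move=> mA mB; apply: measurableU; exact: measurableD. Qed.

Lemma measurable_preimageT {d d'} {T : measurableType d} {U : measurableType d'}
    {f : T -> U} {B : set U} :
  measurable_fun setT f -> measurable B -> measurable (f @^-1` B).
Proof. by move=> mf mB; rewrite -[_ @^-1` _]setTI; exact: mf. Qed.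

Section ae_integral.
Local Open Scope ereal_scope.
Context {d} {T : measurableType d} {R : realType} {mu : {measure set T -> \bar R}}.

Lemma ae_eq_of_le_integral_eq (f g : T -> \bar R) :
  measurable_fun setT f -> measurable_fun setT g ->
  (forall x, 0 <= f x) -> (forall x, f x <= g x) ->
  (forall x, g x \is a fin_num) -> \int[mu]_x g x \is a fin_num ->
  \int[mu]_x f x = \int[mu]_x g x -> ae_eq mu setT f g.
Proof.
move=> mf mg f0 fg gfin igfin ifg.
have ffin x : f x \is a fin_num.
  by rewrite ge0_fin_numE // (le_lt_trans (fg x)) // ltey_eq gfin.
have gf0 x : 0 <= g x - f x by rewrite sube_ge0 ?ffin.
have igf0 : \int[mu]_x (g x - f x) = 0.
  have igE : \int[mu]_x g x = \int[mu]_x (g x - f x) + \int[mu]_x g x.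
    rewrite -{2}ifg -ge0_integralD //; last exact: emeasurable_funB.
    by apply: eq_integral => x _; rewrite subeK.
  by rewrite -[LHS](addeK _ igfin) -igE subee.
have : ae_eq mu setT (fun x => g x - f x) (cst 0).
  apply/ae_eq_integral_abs => //; first exact: emeasurable_funB.
  by rewrite -igf0; apply: eq_integral => x _; rewrite gee0_abs.
apply: filterS => x /(_ I) /eqP + _.
by rewrite sube_eq ?add0e // => /eqP.
Qed.

Lemma ae_mono {P Q : T -> Prop} :
  (\forall x \ae mu, P x) -> (forall x, P x -> Q x) -> \forall x \ae mu, Q x.
Proof. by move=> aeP PQ; apply: filterS aeP. Qed.

Lemma ae_exists_in {A : set T} {P : T -> Prop} :
  measurable A -> 0 < mu A -> (\forall x \ae mu, P x) -> exists2 x, A x & P x.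
Proof.
move=> mA A_gt0 [N [mN N0 PN]]; apply: contrapT => noex.
have AN : A `<=` N by move=> x Ax; apply: PN => Px; apply: noex; exists x.
by move: A_gt0; rewrite (subset_measure0 _ _ AN) // ltxx.
Qed.

Lemma measureY_eq0 (A B : set T) : measurable A -> measurable B ->
  mu A < +oo -> mu (A `&` B) = mu A -> mu (A `&` B) = mu B -> mu (A `+` B) = 0.
Proof.
move=> mA mB Afin ABA ABB.
have Bfin : mu B < +oo by rewrite -ABB [X in X < _]ABA.
rewrite setY_def null_set_setU //; try exact: measurableD.
  by rewrite measureD // [X in _ - X]ABA subee // ge0_fin_numE.
by rewrite measureD // setIC [X in _ - X]ABB subee // ge0_fin_numE.
Qed.

Lemma measureY_trans {A B C : set T} :
  measurable A -> measurable B -> measurable C ->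
  mu (A `+` B) = 0 -> mu (B `+` C) = 0 -> mu (A `+` C) = 0.
Proof.
move=> mA mB mC AB0 BC0.
apply: (subset_measure0 (measurableY mA mC) _ _
  (null_set_setU (measurableY mA mB) (measurableY mB mC) AB0 BC0)).
  by apply: measurableU; exact: measurableY.
by move=> x; have [|] := pselect (A x); have [|] := pselect (B x);
  have [|] := pselect (C x); rewrite /setY /setU /setD /=; tauto.
Qed.

End ae_integral.

Section lebesgue_cube.
Local Open Scope ereal_scope.
Context {R : realType}.

Lemma measurable_I01 : measurable (I01 : set R).
Proof. exact: measurable_itv. Qed.

Lemma lebesgue_measure_I01 : lebesgue_measure (I01 : set R) = 1.
Proof. by rewrite /I01 lebesgue_measure_itv/= ifT ?ltr01 // oppr0 adde0. Qed.

Lemma lebesgue_measure_le1 {A : set R} : measurable A -> A `<=` I01 ->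
  lebesgue_measure A <= 1.
Proof.
by move=> mA AI; rewrite -lebesgue_measure_I01 le_measure ?inE //; exact: measurable_I01.
Qed.

End lebesgue_cube.

Definition lam2 (R : realType) := (@lebesgue_measure R \x @lebesgue_measure R)%E.
HB.instance Definition _ R := Measure.on (lam2 R).

(* The library's sigma-finiteness instance for products is local to its section. *)
Lemma lam2_sigma_finite (R : realType) : sigma_finite setT (lam2 R).
Proof.
have /sigma_finiteP[F [TF ndF Foo]] := sigma_finiteT (@lebesgue_measure R).
exists (fun n => F n `*` F n).
  rewrite -setXTT TF predeqE => -[x y]; split.
    move=> [/= [n _ Fnx] [k _ Fky]]; exists (maxn n k) => //; split.
    - by move: x Fnx; exact/subsetPset/ndF/leq_maxl.
    - by move: y Fky; exact/subsetPset/ndF/leq_maxr.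
  by move=> [n _ []/= ? ?]; split; exists n.
move=> k; have [? ?] := Foo k.
split; first exact: measurableX.
by rewrite /lam2 product_measure1E// lte_mul_pinfty// ge0_fin_numE.
Qed.

HB.instance Definition _ (R : realType) :=
  Measure_isSigmaFinite.Build _ _ _ (lam2 R) (lam2_sigma_finite R).

Section lam_product.
Local Open Scope ereal_scope.
Context {R : realType}.

Lemma lam2_setX (A B : set R) : measurable A -> measurable B ->
  lam2 R (A `*` B) = lebesgue_measure A * lebesgue_measure B.
Proof. exact: (product_measure1E lebesgue_measure lebesgue_measure). Qed.

Lemma lam3_setX (A : set (R * R)) (B : set R) : measurable A -> measurable B ->
  lam3 (A `*` B) = lam2 R A * lebesgue_measure B.
Proof. exact: (product_measure1E (lam2 R) lebesgue_measure). Qed.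

Lemma lam3_ysection (A : set ((R * R) * R)) : measurable A ->
  lam3 A = \int[lebesgue_measure]_z lam2 R (ysection A z).
Proof.
move=> mA.
have FE := indic_fubini_tonelli_FE (@lebesgue_measure R) mA.
have GE := indic_fubini_tonelli_GE (lam2 R) mA.
refine (eq_trans _ (eq_trans
  (indic_fubini_tonelli (lam2 R) lebesgue_measure mA) _)).
  change (lam3 A) with (\int[lam2 R]_x (lebesgue_measure \o xsection A) x).
  by apply: eq_integral => x _; exact: (esym (congr1 (fun f => f x) FE)).
by apply: eq_integral => z _; exact: (congr1 (fun f => f z) GE).
Qed.

End lam_product.

Section saturated_triangle.
Local Open Scope ereal_scope.
Variables (R : realType) (SA SB SC : set (R * R)).
Hypotheses (mSA : measurable SA) (mSB : measurable SB) (mSC : measurable SC).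
Hypotheses (SA01 : SA `<=` I01 `*` I01) (SB01 : SB `<=` I01 `*` I01).

Notation L := (@lebesgue_measure R).

Let EA := [set t : (R * R) * R | I01 t.1.1 /\ SA (t.1.2, t.2)].
Let EB := [set t : (R * R) * R | SB (t.1.1, t.2) /\ I01 t.1.2].
Let E := [set t : (R * R) * R | SC t.1 /\ SB (t.1.1, t.2) /\ SA (t.1.2, t.2)].

Hypotheses (pA : lam3 EA = (1 / 4)%:E) (pB : lam3 EB = (1 / 4)%:E)
  (pC : lam3 (SC `*` I01) = (1 / 4)%:E) (pABC : lam3 E = (1 / 8)%:E).

Let fA z := L (ysection SA z).
Let fB z := L (ysection SB z).
Let m z := lam2 R (ysection E z).

Let measurable_ac : measurable_fun setT (fun t : (R * R) * R => (t.1.1, t.2)).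
Proof. exact: measurable_fun_pair (measurableT_comp measurable_fst measurable_fst) _. Qed.

Let measurable_bc : measurable_fun setT (fun t : (R * R) * R => (t.1.2, t.2)).
Proof. exact: measurable_fun_pair (measurableT_comp measurable_snd measurable_fst) _. Qed.

Let mEA : measurable EA.
Proof.
rewrite (_ : EA = (fun t => t.1.1) @^-1` I01 `&` (fun t => (t.1.2, t.2)) @^-1` SA) //.
apply: measurableI; apply: measurable_preimageT => //; last exact: measurable_I01.
exact: measurableT_comp measurable_fst measurable_fst.
Qed.

Let mEB : measurable EB.
Proof.
rewrite (_ : EB = (fun t => (t.1.1, t.2)) @^-1` SB `&` (fun t => t.1.2) @^-1` I01) //.
apply: measurableI; apply: measurable_preimageT => //; last exact: measurable_I01.
exact: measurableT_comp measurable_snd measurable_fst.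
Qed.

Let mE : measurable E.
Proof.
rewrite (_ : E = fst @^-1` SC `&` ((fun t => (t.1.1, t.2)) @^-1` SB
                                 `&` (fun t => (t.1.2, t.2)) @^-1` SA)) //.
by apply: measurableI; [|apply: measurableI]; exact: measurable_preimageT.
Qed.

Let E_ysection z : ysection E z = SC `&` (ysection SB z `*` ysection SA z).
Proof. by rewrite !ysectionE. Qed.

Let integral_fA : \int[L]_z fA z = (1 / 4)%:E.
Proof.
rewrite -pA lam3_ysection //; apply: eq_integral => z _.
rewrite ysectionE (_ : _ @^-1` EA = I01 `*` ysection SA z); last by rewrite ysectionE.
rewrite lam2_setX ?lebesgue_measure_I01 ?mul1e //.
  exact: measurable_I01.
exact: measurable_ysection.
Qed.

Let integral_fB : \int[L]_z fB z = (1 / 4)%:E.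
Proof.
rewrite -pB lam3_ysection //; apply: eq_integral => z _.
rewrite ysectionE (_ : _ @^-1` EB = ysection SB z `*` I01); last by rewrite ysectionE.
rewrite lam2_setX ?lebesgue_measure_I01 ?mule1 //.
  exact: measurable_ysection.
exact: measurable_I01.
Qed.

Let lam2_SC : lam2 R SC = (1 / 4)%:E.
Proof.
rewrite -pC lam3_setX //; last exact: measurable_I01.
by rewrite [X in _ * X]lebesgue_measure_I01 mule1.
Qed.

Let integral_m : \int[L]_z m z = (1 / 8)%:E.
Proof. by rewrite -pABC lam3_ysection. Qed.

Let ysection01 (S : set (R * R)) z : S `<=` I01 `*` I01 -> ysection S z `<=` I01.
Proof. by move=> S01 x /ysectionP /S01 []. Qed.

Let fA_le1 z : fA z <= 1.
Proof. exact/lebesgue_measure_le1/ysection01/SA01/measurable_ysection. Qed.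

Let fB_le1 z : fB z <= 1.
Proof. exact/lebesgue_measure_le1/ysection01/SB01/measurable_ysection. Qed.

Let m_le_mul z : m z <= fB z * fA z.
Proof.
rewrite /m E_ysection -lam2_setX; try exact: measurable_ysection.
apply: le_measure; rewrite ?inE //.
  apply: measurableI => //; apply: measurableX; exact: measurable_ysection.
apply: measurableX; exact: measurable_ysection.
Qed.

Let m_le_quarter z : m z <= (1 / 4)%:E.
Proof.
rewrite /m -lam2_SC E_ysection; apply: le_measure; rewrite ?inE //.
apply: measurableI => //; apply: measurableX; exact: measurable_ysection.
Qed.

Let fin_of_le {x : \bar R} {y : R} : 0 <= x -> x <= y%:E -> x \is a fin_num.
Proof. by move=> x0 xy; rewrite (ge0_fin_numE x0) (le_lt_trans xy) ?ltry. Qed.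

Let fA_fin z : fA z \is a fin_num.
Proof. exact: fin_of_le (measure_ge0 _ _) (fA_le1 z). Qed.

Let fB_fin z : fB z \is a fin_num.
Proof. exact: fin_of_le (measure_ge0 _ _) (fB_le1 z). Qed.

Let m_fin z : m z \is a fin_num.
Proof. exact: fin_of_le (measure_ge0 _ _) (m_le_quarter z). Qed.

Let real_values z : exists g f r : R,
  [/\ fB z = g%:E, fA z = f%:E, m z = r%:E &
     [/\ (0 <= g)%R, (0 <= f)%R, (r <= (1 / 2) ^+ 2)%R & (r <= g * f)%R]].
Proof.
have := m_le_mul z; have := m_le_quarter z.
rewrite -(fineK (fB_fin z)) -(fineK (fA_fin z)) -(fineK (m_fin z)).
rewrite -EFinM !lee_fin => mC mBA.
exists (fine (fB z)), (fine (fA z)), (fine (m z)); split => //; split => //.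
- exact/fine_ge0/measure_ge0.
- exact/fine_ge0/measure_ge0.
- by rewrite expr2; lra.
Qed.

Let mean z := (fB z + fA z) * (4^-1)%:E.

Let m_le_mean z : m z <= mean z.
Proof.
rewrite /mean; have [g [f [r [-> -> -> [g0 f0 rc rgf]]]]] := real_values z.
rewrite -EFinD -EFinM lee_fin.
have := le_mean_of_le_min _ g0 f0 rc rgf; lra.
Qed.

Let m_eq_mean z : m z = mean z ->
  (fB z = (1 / 2)%:E /\ fA z = (1 / 2)%:E /\ m z = (1 / 4)%:E) \/
  (fB z = 0 /\ fA z = 0).
Proof.
rewrite /mean; have [g [f [r [-> -> -> [g0 f0 rc rgf]]]]] := real_values z.
rewrite -EFinD -EFinM => -[rE].
have [[-> [-> ->]]|[-> ->]] : (g = 1 / 2 /\ f = 1 / 2 /\ r = (1 / 2) ^+ 2)%R \/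
                              (g = 0 /\ f = 0)%R.
  by apply: (eq_mean_of_le_min _ g0 f0 rc rgf); lra.
by left; split => //; split => //; congr (_%:E); rewrite expr2; lra.
by right.
Qed.

Let measurable_fA : measurable_fun setT fA.
Proof. exact: measurable_fun_ysection. Qed.

Let measurable_fB : measurable_fun setT fB.
Proof. exact: measurable_fun_ysection. Qed.

Let measurable_mean : measurable_fun setT mean.
Proof. by apply: emeasurable_funM => //; exact: emeasurable_funD. Qed.

Let integral_mean : \int[L]_z mean z = (1 / 8)%:E.
Proof.
rewrite ge0_integralZr //; last 2 first.
- exact: emeasurable_funD.
- by move=> z _; apply: adde_ge0; exact: measure_ge0.
rewrite ge0_integralD //; try by move=> z _; exact: measure_ge0.
by rewrite integral_fA integral_fB -EFinD -EFinM; congr (_%:E); lra.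
Qed.

Let ae_cases : \forall z \ae L,
  (fB z = (1 / 2)%:E /\ fA z = (1 / 2)%:E /\ m z = (1 / 4)%:E) \/
  (fB z = 0 /\ fA z = 0).
Proof.
have : ae_eq L setT m mean.
  apply: ae_eq_of_le_integral_eq => //.
  - exact: measurable_fun_ysection.
  - by move=> z; rewrite /mean fin_numM // fin_numD fA_fin fB_fin.
  - by rewrite integral_mean.
  - by rewrite integral_m integral_mean.
by move/ae_mono; apply => z /(_ I); exact: m_eq_mean.
Qed.

Let Zhalf := [set z | fB z = (1 / 2)%:E].

Let mZhalf : measurable Zhalf.
Proof. by rewrite -[Zhalf]setTI; exact: measurable_fB (emeasurable_set1 _). Qed.

Let half_neq0 : (1 / 2)%:E != 0 :> \bar R.
Proof. by rewrite eqe; apply/eqP; lra. Qed.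

Let Zhalf01 : Zhalf `<=` I01.
Proof.
move=> z Zz; apply: contrapT => z01; move: half_neq0; rewrite -Zz /fB.
suff -> : ysection SB z = set0 by rewrite measure0 eqxx.
by apply/seteqP; split => // x /ysectionP /SB01 [].
Qed.

Let lebesgue_measure_Zhalf : L Zhalf = (1 / 2)%:E.
Proof.
have : \int[L]_z fB z = \int[L]_z ((1 / 2)%:E * (\1_Zhalf z)%:E).
  apply: ae_eq_integral => //.
  - apply: emeasurable_funM => //; apply/measurable_EFinP.
    exact: measurable_indic.
  - apply: (ae_mono ae_cases) => z + _; rewrite indicE.
    case=> [[Zz _]|[fB0 _]]; first by rewrite mem_set // Zz mule1.
    rewrite memNset ?fB0 ?mule0 // /Zhalf /= fB0 => /esym/eqP.
    exact/negP.
rewrite integral_fB ge0_integralZl //; last first.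
  by apply/measurable_EFinP; exact: measurable_indic.
have Zfin := fin_of_le (measure_ge0 _ _) (lebesgue_measure_le1 mZhalf Zhalf01).
rewrite integral_indic // setIT -(fineK Zfin) -EFinM => -[hZ].
by rewrite -(fineK Zfin); congr (_%:E); lra.
Qed.

Let lam2_SC_fin : lam2 R SC < +oo.
Proof. by rewrite lam2_SC ltry. Qed.

Let section_null {X Y : set R} : measurable X -> measurable Y ->
  lam2 R (SC `+` X `*` Y) = 0 ->
  \forall z \ae L, lam2 R (ysection (E `+` (X `*` Y) `*` Zhalf) z) = 0.
Proof.
move=> mX mY SCXY; apply: (ae_mono ae_cases) => z.
have mEz := measurable_ysection z mE.
have -> : ysection (E `+` (X `*` Y) `*` Zhalf) z =
          ysection E z `+` ysection ((X `*` Y) `*` Zhalf) z by rewrite !ysectionE.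
case=> [[fBz [_ mz]]|[fB0 _]].
  rewrite in_ysectionX; last exact: mem_set.
  have SC_Ez : SC `&` ysection E z = ysection E z.
    by rewrite E_ysection setIA setIid.
  apply: (@measureY_trans _ _ _ (lam2 R) _ _ _ mEz mSC (measurableX mX mY) _ SCXY).
  rewrite setYC; apply: measureY_eq0 => //; rewrite SC_Ez //.
  exact: etrans mz (esym lam2_SC).
rewrite notin_ysectionX; last by rewrite notin_setE /Zhalf /= fB0 => /esym/eqP; exact/negP.
have SBz_null : lam2 R (ysection SB z `*` setT) = 0.
  rewrite lam2_setX //; last exact: measurable_ysection.
  by rewrite -/(fB z) fB0 mul0e.
rewrite setY0; apply: (@subset_measure0 _ _ _ (lam2 R) _ _ mEz _ _ SBz_null).
  exact: measurableX (measurable_ysection z mSB) measurableT.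
by move=> x /ysectionP [_ [SBx _]]; split => //; exact/ysectionP.
Qed.

Lemma saturated_triangle_product : exists X Y Z : set R,
  [/\ measurable X, measurable Y & measurable Z] /\
  [/\ X `<=` I01, Y `<=` I01 & Z `<=` I01] /\
  [/\ L X = (1 / 2)%:E, L Y = (1 / 2)%:E & L Z = (1 / 2)%:E] /\
  lam3 (E `+` (X `*` Y) `*` Z) = 0.
Proof.
have Zhalf_gt0 : 0 < L Zhalf by rewrite lebesgue_measure_Zhalf lte_fin; lra.
have [z0 Zz0 cases_z0] := @ae_exists_in _ _ _ L _ _ mZhalf Zhalf_gt0 ae_cases.
have [fAz0 mz0] : fA z0 = (1 / 2)%:E /\ m z0 = (1 / 4)%:E.
  case: cases_z0 => [[_ //]|[fB0 _]].
  by move: half_neq0; rewrite -Zz0 fB0 eqxx.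
pose X := ysection SB z0; pose Y := ysection SA z0.
have mX : measurable X by exact: measurable_ysection.
have mY : measurable Y by exact: measurable_ysection.
have SCXY : lam2 R (SC `+` X `*` Y) = 0.
  have SC_XY : lam2 R (SC `&` X `*` Y) = (1 / 4)%:E by rewrite -E_ysection.
  have XY : lam2 R (X `*` Y) = (1 / 4)%:E.
    rewrite lam2_setX // -/(fA z0) -/(fB z0) Zz0 fAz0.
    by rewrite -EFinM; congr (_%:E); lra.
  apply: measureY_eq0 => //; first exact: measurableX.
    exact: etrans SC_XY (esym lam2_SC).
  exact: etrans SC_XY (esym XY).
exists X, Y, Zhalf; split; first by split.
split; first by split => //; apply: ysection01.
split; first by split.
have mP : measurable (E `+` (X `*` Y) `*` Zhalf).
  by apply: measurableY => //; apply: measurableX => //; exact: measurableX.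
rewrite lam3_ysection // (ae_eq_integral (cst 0)) ?integral0 //.
  exact: measurable_fun_ysection.
by apply: (ae_mono (section_null mX mY SCXY)) => z + _.
Qed.

End saturated_triangle.

Theorem lemma1 (R : realType) (sA sB sC : R * R -> nat)
  (mA : measurable_fun (I01 `*` I01) sA)
  (mB : measurable_fun (I01 `*` I01) sB)
  (mC : measurable_fun (I01 `*` I01) sC)
  (vA : forall x, (I01 `*` I01) x -> (sA x < 4)%N)
  (vB : forall x, (I01 `*` I01) x -> (sB x < 4)%N)
  (vC : forall x, (I01 `*` I01) x -> (sC x < 4)%N)
  (pa0 : lam3 [set t | cube3 t /\ out_a sA t = 0%N] = (1 / 4)%:E)
  (pb0 : lam3 [set t | cube3 t /\ out_b sB t = 0%N] = (1 / 4)%:E)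
  (pc0 : lam3 [set t | cube3 t /\ out_c sC t = 0%N] = (1 / 4)%:E)
  (p000 : lam3 [set t | cube3 t /\ out_a sA t = 0%N /\ out_b sB t = 0%N
                        /\ out_c sC t = 0%N] = (1 / 8)%:E) :
  exists X Y Z : set R,
    [/\ measurable X, measurable Y & measurable Z] /\
    [/\ X `<=` I01, Y `<=` I01 & Z `<=` I01] /\
    [/\ lebesgue_measure X = (1 / 2)%:E, lebesgue_measure Y = (1 / 2)%:E
      & lebesgue_measure Z = (1 / 2)%:E] /\
    let E := [set t | cube3 t /\ out_a sA t = 0%N /\ out_b sB t = 0%N
                        /\ out_c sC t = 0%N] in
    let P := (X `*` Y) `*` Z in
    lam3 ((E `\` P) `|` (P `\` E)) = 0%E.
Proof.
(* only the events {output = 0} enter *)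
pose zero (s : R * R -> nat) : set (R * R) := (I01 `*` I01) `&` s @^-1` [set 0%N].
have mzero (s : R * R -> nat) : measurable_fun (I01 `*` I01) s -> measurable (zero s).
  by move=> ms; apply: ms => //; apply: measurableX; exact: measurable_I01.
have zero01 (s : R * R -> nat) : zero s `<=` I01 `*` I01 by move=> ? [].
have eA : [set t | cube3 t /\ out_a sA t = 0%N] =
          [set t | I01 t.1.1 /\ zero sA (t.1.2, t.2)].
  by apply/seteqP; split=> -[[a b] c]; rewrite /cube3 /out_a /zero /=; tauto.
have eB : [set t | cube3 t /\ out_b sB t = 0%N] =
          [set t | zero sB (t.1.1, t.2) /\ I01 t.1.2].
  by apply/seteqP; split=> -[[a b] c]; rewrite /cube3 /out_b /zero /=; tauto.
have eC : [set t | cube3 t /\ out_c sC t = 0%N] = zero sC `*` I01.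
  by apply/seteqP; split=> -[[a b] c]; rewrite /cube3 /out_c /zero /=; tauto.
have eE : [set t | cube3 t /\ out_a sA t = 0%N /\ out_b sB t = 0%N
                        /\ out_c sC t = 0%N] =
          [set t | zero sC t.1 /\ zero sB (t.1.1, t.2) /\ zero sA (t.1.2, t.2)].
  by apply/seteqP; split=> -[[a b] c]; rewrite /cube3 /out_a /out_b /out_c /zero /=;
    tauto.
rewrite eA in pa0; rewrite eB in pb0; rewrite eC in pc0; rewrite eE in p000.
have [X [Y [Z [mXYZ [XYZ01 [LXYZ EP]]]]]] :=
  @saturated_triangle_product R _ _ _ (mzero _ mA) (mzero _ mB) (mzero _ mC)
    (zero01 sA) (zero01 sB) pa0 pb0 pc0 p000.
by exists X, Y, Z; split => //; split => //; split => //; rewrite /= eE.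
Qed.
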